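(* Every bipartite TRVG with respect to the torus on $n$ vertices has at most $2n$ edges. Moreover, this bound is best possible for $n\ge 8$: for every $n\ge 8$ there exists a bipartite TRVG with respect to the torus on $n$ vertices with exactly $2n$ edges.
   Context: View the torus as an axis-parallel rectangle $[0,W]\times[0,H]$ with opposite sides identified. Horizontal lines $y=c$ and vertical lines $x=c$ are then closed curves on the torus. A graph $G$ is a TRVG with respect to the torus if its vertices can be represented by a collection of pairwise non-overlapping axis-parallel rectangles on this torus (a rectangle may wrap across the identified sides), one per vertex, such that two distinct vertices are adjacent if and only if some horizontal or vertical line of the torus intersects the interiors of both of their rectangles (other rectangles do not block visibility). *)

From Stdlib Require Import Reals ZArith.
From mathcomp Require Import all_boot.
Set Implicit Arguments. Unset Strict Implicit. Unset Printing Implicit Defensive.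

(* Open arc of a circle of circumference L (the real line modulo L):
   the image of the open interval (a, a+len) in R / L Z. *)
Definition in_arc (L a len t : R) : Prop :=
  exists k : Z, Rlt a (Rplus t (Rmult (IZR k) L)) /\ Rlt (Rplus t (Rmult (IZR k) L)) (Rplus a len).

(* A rectangle on the torus R^2 / (W Z x H Z): lower-left corner (x0,y0),
   width w, height h, with 0 < w < W and 0 < h < H (it may wrap across the
   identified sides). *)
Record trect := TRect { rx : R; ry : R; rw : R; rh : R }.

Definition trect_ok (W H : R) (r : trect) : Prop :=
  (Rlt 0 (rw r) /\ Rlt (rw r) W) /\ (Rlt 0 (rh r) /\ Rlt (rh r) H).

Definition in_rect_interior (W H : R) (r : trect) (p q : R) : Prop :=
  in_arc W (rx r) (rw r) p /\ in_arc H (ry r) (rh r) q.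

Definition hor_visible (H : R) (r s : trect) : Prop :=
  exists c : R, in_arc H (ry r) (rh r) c /\ in_arc H (ry s) (rh s) c.

Definition ver_visible (W : R) (r s : trect) : Prop :=
  exists c : R, in_arc W (rx r) (rw r) c /\ in_arc W (rx s) (rw s) c.

Definition simple_graph (T : finType) (e : rel T) : Prop :=
  (forall x, ~~ e x x) /\ (forall x y, e x y = e y x).

Definition bipartite (T : finType) (e : rel T) : Prop :=
  exists side : T -> bool, forall x y, e x y -> side x != side y.

Definition torus_TRVG (T : finType) (e : rel T) : Prop :=
  exists (W H : R) (rect : T -> trect),
    Rlt 0 W /\ Rlt 0 H /\
    (forall v, trect_ok W H (rect v)) /\
    (forall u v, u != v ->
       ~ (exists p q, in_rect_interior W H (rect u) p q /\
                      in_rect_interior W H (rect v) p q)) /\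
    (forall u v, u != v ->
       (e u v <-> (hor_visible H (rect u) (rect v) \/ ver_visible W (rect u) (rect v)))).

Definition edges (T : finType) (e : rel T) : {set {set T}} :=
  [set A : {set T} | [exists x, exists y, [&& x != y, e x y & A == [set x; y]]]].

From Stdlib Require Import Reals ZArith Lra Lia ClassicalEpsilon.
From mathcomp Require Import all_boot zify.

Set Implicit Arguments.
Unset Strict Implicit.
Unset Printing Implicit Defensive.

(* Upper bound: if two rectangles see each other along some direction, their
   projections on that circle are overlapping arcs, so the starting point of
   one arc lies in the other.  Charge the edge to the owner of that starting
   point together with the direction.  If two edges {u,v} and {u',v} got the
   same charge (v,d), the start of v's arc would lie in the arcs of both u and
   u', so u and u' would see each other too: a triangle, impossible in a
   bipartite graph.  Hence there are at most 2n charges, i.e. edges.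

   Extremal example on the 8n x 8n torus: eight (n+1) x (n+1) "core" squares
   whose x-projections form one 8-cycle of overlapping arcs and whose
   y-projections form another, edge-disjoint one (both cycles are even), and
   n - 8 unit squares along the diagonal inside the x-strip of core 0 and the
   y-strip of core 2.  Every vertex then has exactly one predecessor in each
   direction, and the edges are the 2n distinct pairs {u, prev_d u}. *)

Section CircleArcs.
Local Open Scope R_scope.
Variable L : R.

Definition arcs_meet (a l b m : R) : Prop :=
  exists c, in_arc L a l c /\ in_arc L b m c.

Definition arc_covers (a l b : R) : Prop :=
  exists k : Z, a <= b + IZR k * L < a + l.

Lemma arcs_meet_shift a l b m : 0 < l -> 0 < m ->
  arcs_meet a l b m <->
  exists k : Z, b + IZR k * L < a + l /\ a < b + IZR k * L + m.
Proof.
move=> l_pos m_pos; split.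
- move=> [c [[k [ak ka]] [k' [bk kb]]]].
  by exists (k - k')%Z; rewrite minus_IZR; lra.
- move=> [k [hb ha]].
  pose lo := Rmax a (b + IZR k * L); pose hi := Rmin (a + l) (b + IZR k * L + m).
  have lo_hi : lo < hi by apply: Rmax_lub_lt; apply: Rmin_glb_lt; lra.
  have := Rmax_l a (b + IZR k * L); have := Rmax_r a (b + IZR k * L).
  have := Rmin_l (a + l) (b + IZR k * L + m); have := Rmin_r (a + l) (b + IZR k * L + m).
  rewrite -/lo -/hi => *.
  exists ((lo + hi) / 2); split; [exists 0%Z | exists (- k)%Z]; rewrite ?opp_IZR; lra.
Qed.

Lemma arcs_meet_covers a l b m :
  arcs_meet a l b m -> arc_covers a l b \/ arc_covers b m a.
Proof.
move=> [c [[k [ak ka]] [k' [bk kb]]]].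
have [le_ab | lt_ba] := Rle_or_lt a (b + IZR (k - k') * L).
- by left; exists (k - k')%Z; move: le_ab; rewrite minus_IZR; lra.
- by right; exists (k' - k)%Z; move: lt_ba; rewrite !minus_IZR; lra.
Qed.

Lemma covers_arcs_meet a l a' l' b :
  arc_covers a l b -> arc_covers a' l' b -> arcs_meet a l a' l'.
Proof.
move=> [k [ak ka]] [k' [ak' ka']].
apply/arcs_meet_shift; [lra | lra | exists (k - k')%Z; rewrite minus_IZR; lra].
Qed.

End CircleArcs.

Lemma leq_card_charge (aT bT : finType) (A : {pred aT}) (charge : aT -> bT -> Prop) :
  (forall a, a \in A -> exists b, charge a b) ->
  (forall a a' b, charge a b -> charge a' b -> a = a') ->
  #|A| <= #|bT|.
Proof.
move=> charged charge_inj.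
pose chargeb a b : bool := if excluded_middle_informative (charge a b) then true else false.
have chargebP a b : reflect (charge a b) (chargeb a b).
  by rewrite /chargeb; case: excluded_middle_informative => h; constructor.
have [b0 _ | bT0] := pickP (@predT bT); last first.
  suff -> : #|A| = 0 by [].
  apply: eq_card0 => a; apply/negbTE/negP => /charged [b _].
  by have := bT0 b.
pose f a := odflt b0 [pick b | chargeb a b].
have fP a : a \in A -> charge a (f a).
  move=> /charged [b /chargebP cab]; rewrite /f.
  by case: pickP => [b' /chargebP // | none]; have := none b; rewrite cab.
have f_inj : {in A &, injective f}.
  by move=> a a' /fP fa /fP fa' faa'; apply: charge_inj fa _; rewrite faa'.
by rewrite -(card_in_imset f_inj) max_card.
Qed.

Lemma bipartite_no_triangle (T : finType) (e : rel T) x y z :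
  bipartite e -> e x y -> e y z -> e x z -> False.
Proof.
move=> [side side_e] /side_e xy /side_e yz /side_e xz.
by move: xy yz xz; case: (side x); case: (side y); case: (side z).
Qed.

Section TorusChargeBound.
Variables (T : finType) (e : rel T) (W H : R) (rect : T -> trect).
Hypothesis e_sym : symmetric e.
Hypothesis e_bip : bipartite e.
Hypothesis e_visible : forall u v, u != v ->
  (e u v <-> hor_visible H (rect u) (rect v) \/ ver_visible W (rect u) (rect v)).

Definition covers (d : bool) (r s : trect) : Prop :=
  if d then arc_covers W (rx r) (rw r) (rx s) else arc_covers H (ry r) (rh r) (ry s).

Definition charged (A : {set T}) (p : T * bool) : Prop :=
  exists u, [/\ e u p.1, A = [set u; p.1] & covers p.2 (rect u) (rect p.1)].

Lemma edge_charged A : A \in edges e -> exists p, charged A p.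
Proof.
rewrite inE => /existsP [u /existsP [v /and3P [uv euv /eqP ->]]].
have [d cov] : exists d, covers d (rect u) (rect v) \/ covers d (rect v) (rect u).
  by case/(e_visible uv): euv => /arcs_meet_covers; [exists false | exists true].
case: cov => cov; first by exists (v, d), u.
by exists (u, d), v; rewrite e_sym setUC.
Qed.

Lemma charged_inj A A' p : charged A p -> charged A' p -> A = A'.
Proof.
case: p => v d [u [/= euv -> cu]] [u' [/= eu'v -> cu']].
have [-> // | uu'] := eqVneq u u'.
have euu' : e u u'.
  by apply/(e_visible uu'); case: d cu cu' => cu cu'; [right | left];
    apply: covers_arcs_meet cu cu'.
by case: (bipartite_no_triangle e_bip euu' eu'v euv).
Qed.

Lemma card_edges_le : #|edges e| <= 2 * #|T|.
Proof.
apply: leq_trans (leq_card_charge edge_charged charged_inj) _.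
by rewrite card_prod card_bool mulnC.
Qed.

End TorusChargeBound.

Lemma bipartite_torus_TRVG_edges_le (T : finType) (e : rel T) :
  simple_graph e -> bipartite e -> torus_TRVG e -> #|edges e| <= 2 * #|T|.
Proof.
move=> [_ e_sym] e_bip [W [H [rect [_ [_ [_ [_ e_visible]]]]]]].
exact: card_edges_le e_sym e_bip e_visible.
Qed.

(* The disjuncts are the shifts by 0, L and -L of the second arc; when
   a, b < L no other shift can produce an overlap. *)
Definition nat_arcs_meet (L a l b m : nat) : bool :=
  [|| (b < a + l) && (a < b + m), b + L < a + l | a + L < b + m].

Lemma nat_arcs_meetC L a l b m : nat_arcs_meet L a l b m = nat_arcs_meet L b m a l.
Proof. rewrite /nat_arcs_meet; lia. Qed.

Section NatArcs.
Local Open Scope R_scope.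

Lemma INR_ltnP x y : reflect (INR x < INR y) (x < y)%N.
Proof. by apply: (iffP ltP); [apply: lt_INR | apply: INR_lt]. Qed.

Lemma nat_arcs_meetP L a l b m : (a < L)%N -> (b < L)%N -> (0 < l)%N -> (0 < m)%N ->
  reflect (arcs_meet (INR L) (INR a) (INR l) (INR b) (INR m)) (nat_arcs_meet L a l b m).
Proof.
move=> aL bL l_pos m_pos.
have /INR_ltnP /= l_posR := l_pos; have /INR_ltnP /= m_posR := m_pos.
have /INR_ltnP aLR := aL; have /INR_ltnP bLR := bL.
have a_nonneg := pos_INR a; have b_nonneg := pos_INR b.
apply: (iffP idP); rewrite arcs_meet_shift //.
- case/or3P => [/andP [] /INR_ltnP ba /INR_ltnP ab | /INR_ltnP bLa | /INR_ltnP aLb].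
  + by exists 0%Z; rewrite Rmult_0_l Rplus_0_r -!plus_INR.
  + by exists 1%Z; rewrite !plus_INR in bLa; rewrite Rmult_1_l; lra.
  + by exists (-1)%Z; rewrite !plus_INR in aLb; lra.
- move=> [k [hb ha]].
  have [k_neg | [k0 | k_pos]] := Z.lt_trichotomy k 0.
  + have kL : IZR k * INR L <= -1 * INR L.
      by apply: Rmult_le_compat_r; [exact: pos_INR | apply: IZR_le; lia].
    by apply/or3P/Or33/INR_ltnP; rewrite !plus_INR; lra.
  + move: hb ha; rewrite k0 Rmult_0_l Rplus_0_r => hb ha.
    by apply/or3P/Or31/andP; split; apply/INR_ltnP; rewrite plus_INR.
  + have kL : 1 * INR L <= IZR k * INR L.
      by apply: Rmult_le_compat_r; [exact: pos_INR | apply: IZR_le; lia].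
    by apply/or3P/Or32/INR_ltnP; rewrite !plus_INR; lra.
Qed.

End NatArcs.
Definition linked (T : eqType) (D : Type) (p : D -> T -> T) (d : D) (u v : T) : bool :=
  (v == p d u) || (u == p d v).

Lemma linkedC (T : eqType) (D : Type) (p : D -> T -> T) d u v :
  linked p d u v = linked p d v u.
Proof. exact: orbC. Qed.

Section PrevGraph.
Variables (T D : finType) (p : D -> T -> T).

Definition prev_graph : rel T := fun u v => [exists d, linked p d u v].

Hypothesis p_neq : forall d u, p d u != u.
Hypothesis p_dir_inj : forall d d' u, p d u = p d' u -> d = d'.
Hypothesis p_no_2cycle : forall d d' u, p d (p d' u) != u.

Lemma prev_graph_simple : simple_graph prev_graph.
Proof.
split=> [u | u v]; last by apply: eq_existsb => d; rewrite linkedC.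
by apply/existsPn => d; rewrite /linked orbb eq_sym p_neq.
Qed.

Lemma prev_graph_bipartite (side : T -> bool) :
  (forall d u, side (p d u) != side u) -> bipartite prev_graph.
Proof.
move=> side_p; exists side => u v /existsP [d /orP [] /eqP ->] //.
by rewrite eq_sym.
Qed.

Lemma linked_dir_unique d d' u v : linked p d u v -> linked p d' u v -> d = d'.
Proof.
rewrite /linked => /orP [] /eqP -> /orP [] /eqP puv.
- exact: p_dir_inj puv.
- by move: (p_no_2cycle d' d u); rewrite -puv eqxx.
- by move: (p_no_2cycle d' d v); rewrite -puv eqxx.
- exact: p_dir_inj puv.
Qed.

Definition prev_edge (x : T * D) : {set T} := [set x.1; p x.2 x.1].

Lemma prev_edge_inj : injective prev_edge.
Proof.
move=> [u d] [u' d']; rewrite /prev_edge /= => E.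
have /set2P [uu' | upu'] : u \in [set u'; p d' u'] by rewrite -E set21.
all: have /set2P [pu | pu] : p d u \in [set u'; p d' u'] by rewrite -E set22.
- by move: (p_neq d u); rewrite pu uu' eqxx.
- by rewrite -uu' in pu *; rewrite (p_dir_inj pu).
- by move: (p_no_2cycle d' d u); rewrite pu -upu' eqxx.
- by move: (p_neq d u); rewrite pu upu' eqxx.
Qed.

Lemma edges_prev_graph : edges prev_graph = prev_edge @: setT.
Proof.
apply/setP => A; rewrite inE; apply/existsP/imsetP.
- case=> u /existsP [v /and3P [_ /existsP [d /orP [] /eqP ->] /eqP ->]].
  + by exists (u, d).
  + by exists (v, d); rewrite // /prev_edge setUC.
- case=> [[u d] _ ->]; exists u; apply/existsP; exists (p d u).
  by rewrite eq_sym p_neq eqxx andbT; apply/existsP; exists d; rewrite /linked eqxx.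
Qed.

Lemma card_edges_prev_graph : #|edges prev_graph| = #|T| * #|D|.
Proof. by rewrite edges_prev_graph (card_imset _ prev_edge_inj) cardsT card_prod. Qed.

End PrevGraph.

(* Core square i sits at x = i and y = 3i + 2 (mod 8), in units of n.  As 3 is
   its own inverse mod 8, its y-neighbours are i + 3 and i - 3: the two 8-cycles
   share no pair and both alternate parity.  The offset 2 makes core 2 rather
   than core 0 the y-neighbour of the unit squares, which lie in the x-strip of
   core 0. *)
Definition core_pos (d : bool) (i : nat) : nat := if d then i else (3 * i + 2) %% 8.
Definition hub (d : bool) : nat := if d then 0 else 2.
Definition prevn (d : bool) (u : nat) : nat :=
  if u < 8 then (u + (if d then 7 else 5)) %% 8 else hub d.
Definition vertex_side (u : nat) : bool := if u < 8 then odd u else true.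

Lemma prevn_lt8 d u : prevn d u < 8.
Proof. rewrite /prevn /hub; case: d; case: ifP; lia. Qed.

Lemma prevn_neq d u : prevn d u != u.
Proof. rewrite /prevn /hub; case: d; case: ifP; lia. Qed.

Lemma prevn_dir_inj d d' u : prevn d u = prevn d' u -> d = d'.
Proof. rewrite /prevn /hub; case: d; case: d'; case: ifP => //; lia. Qed.

Lemma prevn_no_2cycle d d' u : prevn d (prevn d' u) != u.
Proof. rewrite {1}/prevn prevn_lt8 /prevn /hub; case: d; case: d'; case: ifP; lia. Qed.

Lemma vertex_side_prevn d u : vertex_side (prevn d u) != vertex_side u.
Proof. rewrite /vertex_side prevn_lt8 /prevn /hub; case: d; case: ifP; lia. Qed.

Lemma core_pos_lt d i : i < 8 -> core_pos d i < 8.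
Proof. rewrite /core_pos; case: d; lia. Qed.

Lemma core_pos_inj d i j : i < 8 -> j < 8 -> (core_pos d i == core_pos d j) = (i == j).
Proof. rewrite /core_pos; case: d; lia. Qed.

Lemma core_pos_prevn d i : i < 8 -> core_pos d (prevn d i) = (core_pos d i + 7) %% 8.
Proof. rewrite /core_pos /prevn => ->; case: d; lia. Qed.

Lemma core_pos_hub d : core_pos d (hub d) = 0.
Proof. by case: d. Qed.

Section Construction.
Variable n : nat.
Hypothesis n_ge8 : 8 <= n.

Definition pos (d : bool) (u : nat) : nat := if u < 8 then core_pos d u * n else u - 7.
Definition width (u : nat) : nat := if u < 8 then n.+1 else 1.

Lemma core_meet i j : i < 8 -> j < 8 -> i != j ->
  nat_arcs_meet (8 * n) (i * n) n.+1 (j * n) n.+1 = (j == (i + 7) %% 8) || (i == (j + 7) %% 8).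
Proof.
rewrite /nat_arcs_meet.
by case: i => [|[|[|[|[|[|[|[|i]]]]]]]] //; case: j => [|[|[|[|[|[|[|[|j]]]]]]]] //; lia.
Qed.

Lemma small_core_meet u i : 8 <= u < n -> i < 8 ->
  nat_arcs_meet (8 * n) (u - 7) 1 (i * n) n.+1 = (i == 0).
Proof. rewrite /nat_arcs_meet => u_small; case: i => [|[|[|[|[|[|[|[|i]]]]]]]] //; lia. Qed.

Lemma small_small_meet u v : 8 <= u < n -> 8 <= v < n -> u != v ->
  nat_arcs_meet (8 * n) (u - 7) 1 (v - 7) 1 = false.
Proof. rewrite /nat_arcs_meet; lia. Qed.

Lemma pos_meet d u v : u < n -> v < n -> u != v ->
  nat_arcs_meet (8 * n) (pos d u) (width u) (pos d v) (width v) = linked prevn d u v.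
Proof.
rewrite /pos /width /linked => un vn uv.
have hub_lt8 : hub d < 8 by case: d.
have prevn_small w : 8 <= w -> prevn d w = hub d by move=> w8; rewrite /prevn ltnNge w8.
have small_neq_prevn w w' : 8 <= w -> (w == prevn d w') = false.
  by move: (prevn_lt8 d w'); lia.
case: (ltnP u 8) => u8; case: (ltnP v 8) => v8.
- rewrite core_meet ?core_pos_lt ?core_pos_inj //.
  by rewrite -!core_pos_prevn // !core_pos_inj ?prevn_lt8.
- rewrite nat_arcs_meetC small_core_meet ?v8 ?core_pos_lt //.
  by rewrite (small_neq_prevn v) // prevn_small // -(core_pos_hub d) core_pos_inj.
- rewrite small_core_meet ?u8 ?core_pos_lt //.
  by rewrite (small_neq_prevn u) // orbF prevn_small // -(core_pos_hub d) core_pos_inj.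
- by rewrite small_small_meet ?u8 ?v8 // !small_neq_prevn.
Qed.

Lemma pos_lt d u : u < n -> pos d u < 8 * n.
Proof.
rewrite /pos; case: ifP => u8 un; last lia.
by rewrite ltn_mul2r core_pos_lt // andbT; lia.
Qed.

Lemma width_gt0 u : 0 < width u.
Proof. by rewrite /width; case: ifP. Qed.

Lemma width_lt u : width u < 8 * n.
Proof. rewrite /width; case: ifP; lia. Qed.

Definition prev_ord (d : bool) (u : 'I_n) : 'I_n :=
  Ordinal (leq_trans (prevn_lt8 d u) n_ge8).

Lemma prev_ord_neq d u : prev_ord d u != u.
Proof. by rewrite -val_eqE prevn_neq. Qed.

Lemma prev_ord_dir_inj d d' u : prev_ord d u = prev_ord d' u -> d = d'.
Proof. by move/(congr1 val)/prevn_dir_inj. Qed.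

Lemma prev_ord_no_2cycle d d' u : prev_ord d (prev_ord d' u) != u.
Proof. by rewrite -val_eqE prevn_no_2cycle. Qed.

Definition torus_graph : rel 'I_n := prev_graph prev_ord.

Definition square (u : 'I_n) : trect :=
  TRect (INR (pos true u)) (INR (pos false u)) (INR (width u)) (INR (width u)).

Lemma square_meet d (u v : 'I_n) : u != v ->
  arcs_meet (INR (8 * n)) (INR (pos d u)) (INR (width u)) (INR (pos d v)) (INR (width v))
  <-> linked prev_ord d u v.
Proof.
move=> uv; have -> : linked prev_ord d u v = linked prevn d u v by rewrite /linked -!val_eqE.
rewrite -pos_meet //; apply: rwP; apply: nat_arcs_meetP;
  by [apply: pos_lt | apply: width_gt0].
Qed.

Lemma torus_graph_TRVG : torus_TRVG torus_graph.
Proof.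
have L_pos : Rlt 0 (INR (8 * n)) by apply/lt_0_INR/ltP; lia.
exists (INR (8 * n)), (INR (8 * n)), square; do 2 split => //; split; [|split].
- move=> u; have w_pos : Rlt 0 (INR (width u)) by apply/lt_0_INR/ltP/width_gt0.
  by have /INR_ltnP wL := width_lt u.
- move=> u v uv [x [y [[xu yu] [xv yv]]]].
  have linked_x : linked prev_ord true u v by apply/(square_meet true uv); exists x.
  have linked_y : linked prev_ord false u v by apply/(square_meet false uv); exists y.
  by have := linked_dir_unique prev_ord_dir_inj prev_ord_no_2cycle linked_x linked_y.
- move=> u v uv; split.
  + by case/existsP => -[] /(square_meet _ uv); [right | left].
  + by case=> /(square_meet _ uv) linked_uv; apply/existsP; [exists false | exists true].
Qed.

Lemma card_edges_torus_graph : #|edges torus_graph| = 2 * n.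
Proof.
rewrite (card_edges_prev_graph prev_ord_neq prev_ord_dir_inj prev_ord_no_2cycle).
by rewrite card_ord card_bool mulnC.
Qed.

End Construction.

Theorem theorem4 :
  (forall (n : nat) (T : finType) (e : rel T),
      #|T| = n -> simple_graph e -> bipartite e -> torus_TRVG e ->
      #|edges e| <= 2 * n)
  /\
  (forall n : nat, 8 <= n ->
      exists e : rel 'I_n,
        simple_graph e /\ bipartite e /\ torus_TRVG e /\ #|edges e| = 2 * n).
Proof.
split=> [n T e <- | n n_ge8]; first exact: bipartite_torus_TRVG_edges_le.
exists (torus_graph n_ge8); split; [|split; [|split]].
- exact: prev_graph_simple (prev_ord_neq n_ge8).
- apply: (prev_graph_bipartite (side := fun u : 'I_n => vertex_side u)) => d u.
  exact: vertex_side_prevn.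
- exact: torus_graph_TRVG.
- exact: card_edges_torus_graph.
Qed.
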